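(* Let $n,m\ge 2$ and $G\in\mathcal{O}(K_{n,m})$. Then $G$ has the minimum number of edges among all graphs in $\mathcal{O}(K_{n,m})$ if and only if $G$ is a binary star; in this case $|E(G)|=n+m-1$.
   Context: The local complement $c_v(G)$ complements the edges among the neighbours of $v$. $\mathcal{O}(G)$ is the set of all graphs on the labelled vertex set $V(G)$ obtainable from $G$ by finite sequences of local complements. A binary star is a tree consisting of two star graphs whose centers are joined by an edge (equivalently, two adjacent vertices $a,b$ such that every other vertex is adjacent to exactly one of $a,b$ and to nothing else). *)

From mathcomp Require Import all_boot.
Set Implicit Arguments. Unset Strict Implicit. Unset Printing Implicit Defensive.

(* A simple graph on the labelled vertex set T is given by its edge set:
   a set of 2-element subsets of T. *)
Definition graph (T : finType) := {set {set T}}.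

Section Graphs.
Variable T : finType.

Definition nbhd (E : graph T) (v : T) : {set T} :=
  [set x | (x != v) && ([set v; x] \in E)].

Definition local_complement (E : graph T) (v : T) : graph T :=
  let N := nbhd E v in
  let P := [set [set x; y] | x in N, y in N & x != y] in
  (E :\: P) :|: (P :\: E).

Definition lc_seq (E : graph T) (s : seq T) : graph T :=
  foldl local_complement E s.

Definition lc_orbit (E H : graph T) : Prop :=
  exists s : seq T, H = lc_seq E s.

Definition binary_star (E : graph T) : Prop :=
  exists a b : T, [/\ a != b, [set a; b] \in E,
    (forall x, x != a -> x != b ->
       ([set a; x] \in E) (+) ([set b; x] \in E)) &
    (forall x y, x != a -> x != b -> y != a -> y != b -> [set x; y] \notin E)].

Definition min_edges_in_orbit (G H : graph T) : Prop :=
  forall H', lc_orbit G H' -> #|H| <= #|H'|.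
End Graphs.

Definition Knm (n m : nat) : graph 'I_(n + m) :=
  [set [set x; y] | x in [set x : 'I_(n + m) | (x < n)%N],
                    y in [set y : 'I_(n + m) | (n <= y)%N]].

(* Local complementation preserves connectivity and the cut-rank of every
   pair of vertices.  Hence every graph in the orbit of K_{n,m} is connected,
   so it has at least n + m - 1 edges, and a pair {u, v} has cut-rank 2 in it
   exactly when u and v lie on different sides.  Pivoting K_{n,m} on an edge
   ab (local complements at a, b, a) produces a binary star, which has
   n + m - 1 edges; so the minimum is n + m - 1 and the minimisers are the
   trees of the orbit.  In such a tree a leaf hangs on a branching vertex of
   its own side (cut-rank), and two branching vertices on the same side would
   be twins lying on a cycle; so each side has exactly one branching vertex,
   these two are adjacent by connectivity, and all other vertices are leaves
   hanging on them. *)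

From mathcomp Require Import all_boot zify.
Set Implicit Arguments. Unset Strict Implicit. Unset Printing Implicit Defensive.

Section Graphs.
Variable T : finType.
Implicit Types (E : graph T) (a b u v w x y z : T).

Definition adj E : rel T := fun x y => [set x; y] \in E.

Definition simple_graph E := {in E, forall e : {set T}, #|e| = 2}.

Definition connected E := forall x y, connect (adj E) x y.

Lemma adjC E : symmetric (adj E).
Proof. by move=> x y; rewrite /adj setUC. Qed.

Lemma adj_irr E x : simple_graph E -> adj E x x = false.
Proof. by move=> sE; apply/negP => /sE; rewrite setUid cards1. Qed.

Lemma set2_inj a b x y : a != b -> [set x; y] = [set a; b] ->
  (x, y) = (a, b) \/ (x, y) = (b, a).
Proof.
move=> ab exy; have /set2P[] : x \in [set a; b] by rewrite -exy set21.
  have : b \in [set x; y] by rewrite exy set22.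
  by move=> + xa; rewrite xa !inE eq_sym (negbTE ab) /= => /eqP->; left.
have : a \in [set x; y] by rewrite exy set21.
by move=> + xb; rewrite xb !inE (negbTE ab) /= => /eqP->; right.
Qed.

Lemma adj_lc E w x y :
  adj (local_complement E w) x y =
  adj E x y (+) [&& x != y, x != w, y != w, adj E w x & adj E w y].
Proof.
rewrite /adj /local_complement in_setU !in_setD.
set P := imset2 _ _ _.
suff -> : ([set x; y] \in P) = [&& x != y, x != w, y != w, adj E w x & adj E w y].
  by case: ([set x; y] \in E); case: [&& x != y, _, _, _ & _].
apply/imset2P/idP => [[a b] | /and5P[xy xw yw wx wy]]; last first.
  by exists x y; rewrite ?inE ?xy ?xw ?yw -?/(adj E w x) -?/(adj E w y) ?wx ?wy.
rewrite !inE => /andP[aw wa] /andP[/andP[bw wb] ab] /(set2_inj ab)[] [-> ->];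
  by rewrite /adj ?aw ?bw ?wa ?wb ?ab // eq_sym ab.
Qed.

Lemma adj_lc_pivot E w x : adj (local_complement E w) w x = adj E w x.
Proof. by rewrite adj_lc eqxx !andbF addbF. Qed.

Lemma simple_graph_lc E w : simple_graph E -> simple_graph (local_complement E w).
Proof.
move=> sE e; rewrite in_setU !in_setD => /orP[/andP[_ /sE] // | /andP[_]].
by case/imset2P=> a b _; rewrite !inE => /andP[_ ab] ->; rewrite cards2 ab.
Qed.

Lemma connected_lc E w : connected E -> connected (local_complement E w).
Proof.
move=> cE x y; apply: connect_sub (cE x y) => {}x {}y exy.
have [/and5P[xy xw yw wx wy] | P'xy] :=
  boolP [&& x != y, x != w, y != w, adj E w x & adj E w y].
  apply: (@connect_trans _ _ w); apply: connect1; rewrite adj_lc.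
    by rewrite adjC wx eqxx /= !andbF.
  by rewrite wy eqxx /= !andbF.
by apply: connect1; rewrite adj_lc exy (negbTE P'xy).
Qed.

Lemma simple_graph_lc_seq E s : simple_graph E -> simple_graph (lc_seq E s).
Proof. by elim: s E => //= w s IH E /(@simple_graph_lc E w)/IH. Qed.

Lemma connected_lc_seq E s : connected E -> connected (lc_seq E s).
Proof. by elim: s E => //= w s IH E /(@connected_lc E w)/IH. Qed.

(* Predicates on [T] are read as vectors of GF(2)^T. *)
Definition lin_indep2 (X Y : pred T) :=
  [&& [exists z, X z], [exists z, Y z] & [exists z, X z (+) Y z]].

Lemma lin_indep2C X Y : lin_indep2 X Y = lin_indep2 Y X.
Proof.
rewrite /lin_indep2 andbCA; congr [&& _, _ & _].
by apply: eq_existsb => z; rewrite addbC.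
Qed.

Lemma eq_lin_indep2 X X' Y Y' :
  X =1 X' -> Y =1 Y' -> lin_indep2 X Y = lin_indep2 X' Y'.
Proof.
move=> eX eY; rewrite /lin_indep2 (eq_existsb eX) (eq_existsb eY).
by congr [&& _, _ & _]; apply: eq_existsb => z; rewrite eX eY.
Qed.

Lemma lin_indep2_addr X Y : lin_indep2 X (fun z => Y z (+) X z) = lin_indep2 X Y.
Proof.
rewrite /lin_indep2 (eq_existsb (fun z => addbC (Y z) (X z))).
have -> : [exists z, X z (+) (Y z (+) X z)] = [exists z, Y z].
  by apply: eq_existsb => z; rewrite addbC addbK.
by congr (_ && _); rewrite andbC.
Qed.

Lemma exists_add_col X c w : c w = false ->
  [exists z, X z (+) (X w && c z)] = [exists z, X z].
Proof.
case Xw: (X w) => cw; last by apply: eq_existsb => z; rewrite addbF.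
by apply/idP/idP => _; apply/existsP; exists w; rewrite Xw ?cw.
Qed.

(* Adding column [w] to the columns in [c] preserves the rank. *)
Lemma lin_indep2_add_col X Y c w : c w = false ->
  lin_indep2 (fun z => X z (+) (X w && c z)) (fun z => Y z (+) (Y w && c z)) =
  lin_indep2 X Y.
Proof.
move=> cw; rewrite /lin_indep2 !exists_add_col //.
rewrite -(exists_add_col (fun z => X z (+) Y z) cw); congr [&& _, _ & _].
by apply: eq_existsb => z; case: (X z); case: (Y z); case: (X w); case: (Y w); case: (c z).
Qed.

Lemma lin_dep2_eq X Y : [exists z, X z] -> [exists z, Y z] -> lin_indep2 X Y = false ->
  X =1 Y.
Proof.
rewrite /lin_indep2 => -> -> /negbT; rewrite negb_exists => /forallP XY z.
by have := XY z; case: (X z); case: (Y z).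
Qed.

Definition cut_row E u v : pred T := fun z => [&& z != u, z != v & adj E u z].

Definition cut_rank2 E u v := lin_indep2 (cut_row E u v) (cut_row E v u).

Lemma cut_rank2C E u v : cut_rank2 E u v = cut_rank2 E v u.
Proof. exact: lin_indep2C. Qed.

Lemma cut_row_lc_pivot E u v :
  cut_row (local_complement E u) u v =1 cut_row E u v.
Proof. by move=> z; rewrite /cut_row adj_lc_pivot. Qed.

Lemma cut_row_lc_other E u v : u != v ->
  cut_row (local_complement E u) v u =1
  fun z => cut_row E v u z (+) (adj E u v && cut_row E u v z).
Proof.
move=> uv z; rewrite /cut_row adj_lc.
case: (eqVneq z v) => [->|zv]; first by rewrite !andbF.
case: (eqVneq z u) => [->|zu] /=; first by rewrite !andbF.
by rewrite eq_sym uv.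
Qed.

Lemma cut_row_lc E w u v : w != u -> w != v ->
  cut_row (local_complement E w) u v =1
  fun z => cut_row E u v z (+)
           (cut_row E u v w && [&& z != u, z != v, z != w & adj E w z]).
Proof.
move=> wu wv z; rewrite /cut_row adj_lc wu wv /= (eq_sym u w) wu (adjC E w u).
case: (eqVneq z u) => [->|zu]; first by rewrite !andbF.
case: (eqVneq z v) => [->|zv] /=; first by rewrite andbF.
by case: (z != w); case: (adj E u w).
Qed.

(* At an end of the pair, local complementation adds one row to the other;
   elsewhere it adds column [w] to the columns of the other neighbours of [w]. *)
Lemma cut_rank2_lc E w u v :
  cut_rank2 (local_complement E w) u v = cut_rank2 E u v.
Proof.
wlog wv : u v / w != v.
  move=> IH; case: (eqVneq w v) => [<-|]; last exact: IH.
  case: (eqVneq w u) => [<-|wu]; last by rewrite cut_rank2C IH // cut_rank2C.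
  have twin F : cut_rank2 F w w = false.
    by apply/and3P => -[_ _ /existsP[z]]; rewrite addbb.
  by rewrite !twin.
case: (eqVneq w u) => [<-|wu].
  rewrite /cut_rank2 (eq_lin_indep2 (cut_row_lc_pivot E w v) (cut_row_lc_other E wv)).
  case: (adj E w v); first exact: lin_indep2_addr.
  by apply: eq_lin_indep2 => // z; rewrite addbF.
pose c z := [&& z != u, z != v, z != w & adj E w z].
have cw : c w = false by rewrite /c eqxx !andbF.
rewrite /cut_rank2 -[RHS](lin_indep2_add_col _ _ cw); apply: eq_lin_indep2 => z.
  by rewrite cut_row_lc.
by rewrite cut_row_lc // /c; case: (z != u); case: (z != v).
Qed.

Lemma cut_rank2_lc_seq E s u v : cut_rank2 (lc_seq E s) u v = cut_rank2 E u v.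
Proof. by elim: s E => //= w s IH E; rewrite IH cut_rank2_lc. Qed.

Lemma connect_exit (e : rel T) (S : {set T}) x y :
  connect e x y -> x \in S -> y \notin S -> exists a b, [/\ a \in S, b \notin S & e a b].
Proof.
case/connectP=> p; elim: p x => [|z p IH] x /=; first by move=> _ -> xS; rewrite xS.
case/andP=> exz pz yp xS yS; have [zS|zS] := boolP (z \in S); first exact: IH pz yp zS yS.
by exists x, z.
Qed.

Lemma connect_setD1 E e x y :
  adj E x y -> [set x; y] != e -> connect (adj (E :\ e)) x y.
Proof. by move=> xy ne; apply: connect1; rewrite /adj in_setD1 ne. Qed.

Lemma connected_card_edges E : connected E -> #|T| <= #|E|.+1.
Proof.
move=> cE.
have grow k : k < #|T| ->
    exists S : {set T}, #|S| = k.+1 /\ k <= #|[set e in E | e \subset S]|.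
  elim: k => [|k IH] ltkT.
    by case/card_gt0P: ltkT => x _; exists [set x]; rewrite cards1.
  have [S [cS leS]] := IH (ltnW ltkT).
  have [y yS] : exists y, y \notin S.
    by apply/existsP; rewrite -negb_forall; apply: contraTN ltkT => /forallP ST;
      rewrite -cS (eq_card ST) ltnn.
  have [x xS] : exists x, x \in S by apply/card_gt0P; rewrite cS.
  have [a [b [aS bS eab]]] := connect_exit (cE x y) xS yS.
  exists (b |: S); split; first by rewrite cardsU1 bS cS.
  have abS : ~~ ([set a; b] \subset S) by apply: contra bS => /subsetP; apply; rewrite set22.
  apply: leq_trans (_ : #|[set a; b] |: [set e in E | e \subset S]| <= _).
    by rewrite cardsU1 inE (negbTE abS) andbF.
  apply/subset_leq_card/subsetP => e; rewrite !inE => /orP[/eqP-> | /andP[-> eS]].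
    rewrite (eab : [set a; b] \in E).
    by apply/subsetP => z /set2P[] ->; rewrite !inE ?aS ?eqxx ?orbT.
  exact: subset_trans eS (subsetUr _ _).
case T0 : #|T| => [|t] //; have /grow[S [_ leS]] : t < #|T| by rewrite T0.
rewrite ltnS (leq_trans leS) // subset_leq_card //.
by apply/subsetP => e; rewrite inE => /andP[].
Qed.

Definition acyclic E := forall x y, adj E x y -> ~~ connect (adj (E :\ [set x; y])) x y.

Lemma acyclic_of_card E : connected E -> #|E| < #|T| -> acyclic E.
Proof.
move=> cE ltET x y exy; apply/negP => cxy.
have cE' : connected (E :\ [set x; y]).
  move=> a b; apply: connect_sub (cE a b) => {}a {}b eab.
  have [exy_ab|ne] := eqVneq [set a; b] [set x; y]; last first.
    exact: connect_setD1.
  have [->|ab] := eqVneq a b; first exact: connect0.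
  case: (set2_inj ab (esym exy_ab)) => -[<- <-] //.
  by rewrite (sym_connect_sym (adjC _)).
have := connected_card_edges cE'.
move: ltET; rewrite (cardsD1 [set x; y] E) (exy : [set x; y] \in E) add1n.
by move=> /leq_trans lt /lt; rewrite ltnn.
Qed.

Lemma binary_star_card E : simple_graph E -> binary_star E -> #|E| < #|T|.
Proof.
move=> sE [a [b [ab eab one_center no_other]]].
pose f x := if x == b then [set a; b] else if adj E a x then [set a; x] else [set b; x].
have fP y : y != a -> f y \in f @: [set~ a] by move=> ya; apply: imset_f; rewrite !inE.
suff /subset_leq_card/leq_trans/(_ (leq_imset_card _ _)) : E \subset f @: [set~ a].
  by rewrite cardsC1 => /leq_ltn_trans; apply; rewrite ltn_predL; apply/card_gt0P; exists a.
apply/subsetP => _ /[dup] /sE /eqP /cards2P[x [y [xy ->]]] exy.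
wlog xab : x y xy exy / (x == a) || (x == b).
  move=> IH; have [|xab] := boolP ((x == a) || (x == b)); first exact: IH.
  rewrite setUC; apply: (IH y x); [by rewrite eq_sym | by rewrite setUC |].
  apply: contraTT exy; rewrite !negb_or in xab *; case/andP: xab => xa xb /andP[ya yb].
  exact: no_other.
case/orP: xab => /eqP-> in xy exy *.
  have [->|yb] := eqVneq y b; first by have := fP b; rewrite /f eqxx; apply; rewrite eq_sym.
  by have := fP y; rewrite /f /adj (negbTE yb) exy; apply; rewrite eq_sym.
have [->|ya] := eqVneq y a.
  by have := fP b; rewrite /f eqxx setUC; apply; rewrite eq_sym.
rewrite eq_sym in xy; have := one_center y ya xy; rewrite exy addbT => /negbTE ay.
by have := fP y; rewrite /f /adj (negbTE xy) ay; apply.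
Qed.

Lemma set2_neq_l x y (e : {set T}) : x \notin e -> [set x; y] != e.
Proof. by apply: contraNneq => <-; rewrite set21. Qed.

Lemma set2_neq_r x y (e : {set T}) : y \notin e -> [set x; y] != e.
Proof. by apply: contraNneq => <-; rewrite set22. Qed.

Definition branching E x := [exists y, exists z, [&& y != z, adj E x y & adj E x z]].

Lemma not_branching_uniq E x y z : ~~ branching E x -> adj E x y -> adj E x z -> z = y.
Proof.
move=> bx xy xz; apply/eqP; apply: contraNT bx => zy.
by apply/existsP; exists z; apply/existsP; exists y; rewrite zy xy xz.
Qed.

Lemma branching_cut_row E u v : simple_graph E -> branching E u -> exists z, cut_row E u v z.
Proof.
move=> sE /existsP[y /existsP[z /and3P[yz uy uz]]].
have ne w : adj E u w -> w != u by apply: contraTneq => ->; rewrite adj_irr.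
have [yv|yv] := eqVneq y v; [exists z | exists y]; rewrite /cut_row ?ne ?uy ?uz ?yv //.
by rewrite -yv eq_sym yz.
Qed.

(* Twins that are adjacent, or that share two neighbours, lie on a common cycle. *)
Lemma acyclic_twins E u u' : simple_graph E -> acyclic E -> u != u' ->
  branching E u -> cut_row E u u' =1 cut_row E u' u -> False.
Proof.
move=> sE aE uu' /existsP[s1 /existsP[s2 /and3P[s12 us1 us2]]] twin.
have ne w : adj E u w -> w != u by apply: contraTneq => ->; rewrite adj_irr.
have common w : adj E u w -> w != u' -> adj E u' w.
  by move=> uw wu'; have := twin w; rewrite /cut_row (ne w uw) wu' uw => /esym/and3P[].
have [uu'E|nuu'] := boolP (adj E u u').
  have [s [us su']] : exists s, adj E u s /\ s != u'.
    by have [e1|] := eqVneq s1 u'; [exists s2; rewrite -e1 eq_sym | exists s1].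
  have s_uu' : s \notin [set u; u'] by rewrite !inE negb_or (ne s us) su'.
  apply: (negP (aE _ _ uu'E)); apply: (@connect_trans _ _ s); apply: connect_setD1.
  - exact: us.
  - exact: set2_neq_r.
  - by rewrite adjC; apply: common.
  - exact: set2_neq_l.
have su' s : adj E u s -> s != u' by apply: contraTneq => ->.
have u'_us1 : u' \notin [set u; s1] by rewrite !inE negb_or eq_sym uu' eq_sym su'.
have s2_us1 : s2 \notin [set u; s1] by rewrite !inE negb_or (ne s2 us2) eq_sym s12.
apply: (negP (aE _ _ us1)); apply: (@connect_trans _ _ s2).
  by apply: connect_setD1 => //; apply: set2_neq_r.
apply: (@connect_trans _ _ u'); apply: connect_setD1.
- by rewrite adjC; apply: common; rewrite ?su'.
- exact: set2_neq_l.
- by apply: common; rewrite ?su'.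
- exact: set2_neq_l.
Qed.

End Graphs.

Section CompleteBipartite.
Variables n m : nat.
Implicit Types (a b u v x y z : 'I_(n + m)).

Lemma adj_Knm x y : adj (Knm n m) x y = ((x < n) != (y < n)).
Proof.
rewrite /adj /Knm; apply/imset2P/idP => [[a b] | ].
  rewrite !inE => an bn; have bn' : (b < n) = false by rewrite ltnNge bn.
  have ab : a != b by apply: contraTneq an => ->; rewrite bn'.
  by case/(set2_inj ab) => -[-> ->]; rewrite an bn'.
have [xn|xn] := boolP (x < n); rewrite eq_sym ?eqb_id ?eqbF_neg ?negbK => yn.
  by exists x y; [rewrite inE | rewrite inE leqNgt |].
by exists y x; [rewrite inE | rewrite inE leqNgt | rewrite setUC].
Qed.

Lemma simple_graph_Knm : simple_graph (Knm n m).
Proof.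
move=> e /imset2P[a b]; rewrite !inE => an bn ->; rewrite cards2.
suff ab : a != b by rewrite ab.
by apply: contraTneq an => ->; rewrite -leqNgt.
Qed.

Lemma binary_star_Knm_pivot a b : a < n -> ~~ (b < n) ->
  binary_star (lc_seq (Knm n m) [:: a; b; a]).
Proof.
move=> sa sb; rewrite /lc_seq /=.
(* [E1] makes the side of [b] a clique; [E2] joins [b] to every vertex and makes
   the side of [a] a clique; complementing at [a] then leaves the binary star. *)
set E1 := local_complement (Knm n m) a; set E2 := local_complement E1 b.
have adj1 x y :
    adj E1 x y = ((x < n) != (y < n)) (+) [&& x != y, ~~ (x < n) & ~~ (y < n)].
  rewrite adj_lc !adj_Knm sa; congr (_ (+) _).
  have [xn|xn] := boolP (x < n); first by rewrite !andbF.
  have [yn|yn] := boolP (y < n); first by rewrite !andbF.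
  have na z : ~~ (z < n) -> z != a by apply: contraNneq => ->.
  by rewrite (na x xn) (na y yn).
have adj1b x : x != b -> adj E1 b x.
  by move=> xb; rewrite adj1 (negbTE sb) (eq_sym b x) xb; case: (x < n).
have adj2 x y : adj E2 x y = adj E1 x y (+) [&& x != y, x != b & y != b].
  rewrite adj_lc; congr (_ (+) _).
  have [->|xb] := eqVneq x b; first by rewrite !andbF.
  have [->|yb] := eqVneq y b; first by rewrite !andbF.
  by rewrite !adj1b ?andbT.
have ab : a != b by apply: contraNneq sb => <-.
have adj2a x : x != a -> adj E2 a x = (x < n) || (x == b).
  move=> xa; rewrite adj2 adj1 sa (eq_sym a x) xa ab andbF addbF.
  by have [->|xb] := eqVneq x b; [rewrite (negbTE sb) | case: (x < n)].
have adj2ab : adj E2 a b by rewrite adj2a; [rewrite eqxx orbT | rewrite eq_sym].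
clearbody E2 E1.
exists a, b; split; [exact: ab | | |].
- by rewrite -[_ \in _]/(adj _ a b) adj_lc_pivot.
- move=> x xa xb; rewrite -[X in X (+) _]/(adj _ a x) -[X in _ (+) X]/(adj _ b x).
  rewrite adj_lc_pivot adj_lc (adj2a _ xa) adj2ab (negbTE xb).
  rewrite (eq_sym b x) xb (eq_sym b a) ab xa.
  by rewrite adj2 (adj1b _ xb) (eq_sym b x) xb eqxx; case: (x < n).
- move=> x y xa xb ya yb; rewrite -[_ \in _]/(adj _ x y) adj_lc (adj2a _ xa) (adj2a _ ya).
  rewrite (negbTE xb) (negbTE yb) xa ya adj2 adj1 xb yb.
  by have [->|_] := eqVneq x y; case: (x < n); case: (y < n).
Qed.

Hypotheses (n2 : 1 < n) (m2 : 1 < m).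

Lemma exists_on_side x (t : bool) : exists z, z != x /\ (z < n) = t.
Proof.
have [i [j [lti ltj ij si sj]]] : exists i j,
    [/\ i < n + m, j < n + m, i != j, (i < n) = t & (j < n) = t].
  by case: t; [exists 0, 1 | exists n, n.+1]; split; rewrite ?ltnn //;
    try apply/negbTE; rewrite -?leqNgt; lia.
have [<-|ix] := eqVneq (Ordinal lti) x; last by exists (Ordinal lti).
by exists (Ordinal ltj); rewrite -val_eqE eq_sym.
Qed.

Lemma connected_Knm : connected (Knm n m).
Proof.
move=> x y; have [ex|ne] := eqVneq (x < n) (y < n).
  have [z [_ zx]] := exists_on_side x (~~ (x < n)).
  by apply: (@connect_trans _ _ z); apply: connect1; rewrite adj_Knm zx -?ex; case: (x < n).
by apply: connect1; rewrite adj_Knm.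
Qed.

Lemma cut_rank2_Knm u v : u != v -> cut_rank2 (Knm n m) u v = ((u < n) != (v < n)).
Proof.
move=> uv; have rowK w w' z :
    cut_row (Knm n m) w w' z = [&& z != w, z != w' & (w < n) != (z < n)].
  by rewrite /cut_row adj_Knm.
have [e|ne] := eqVneq (u < n) (v < n).
  apply/and3P => -[_ _ /existsP[z]]; rewrite !rowK e.
  by case: (z != u); case: (z != v); case: (_ != _).
have [z1 [z1v s1]] := exists_on_side v (v < n).
have [z2 [z2u s2]] := exists_on_side u (u < n).
have z1u : z1 != u by apply: contraNneq ne => <-; rewrite s1.
have z2v : z2 != v by apply: contraNneq ne => <-; rewrite s2.
apply/and3P; split; apply/existsP.
- by exists z1; rewrite rowK z1u z1v s1 ne.
- by exists z2; rewrite rowK z2v z2u s2 eq_sym ne.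
- by exists z1; rewrite !rowK z1u z1v s1 ne eqxx.
Qed.

End CompleteBipartite.

Section TreesInOrbit.
Variables (n m : nat) (G : graph 'I_(n + m)).
Hypotheses (n2 : 1 < n) (m2 : 1 < m).
Hypotheses (sG : simple_graph G) (cG : connected G) (aG : acyclic G).
Hypothesis rG : forall u v, u != v -> cut_rank2 G u v = ((u < n) != (v < n)).
Implicit Types (a b u v x y z : 'I_(n + m)).

Lemma exists_neighbour u : exists x, adj G u x.
Proof.
have [v [vu sv]] := exists_on_side n2 m2 u (~~ (u < n)).
have : cut_rank2 G u v by rewrite rG ?sv; [case: (u < n) | rewrite eq_sym].
by case/and3P => /existsP[z /and3P[_ _ uz]] _ _; exists z.
Qed.

Lemma leaf_neighbour_side u x : ~~ branching G u -> adj G u x -> (x < n) = (u < n).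
Proof.
move=> bu ux; have [//|side_ux] := eqVneq (x < n) (u < n).
have xu : x != u by apply: contraTneq ux => ->; rewrite adj_irr.
have : cut_rank2 G u x by rewrite rG; rewrite eq_sym.
case/and3P => /existsP[z /and3P[_ zx uz]] _ _.
by rewrite (not_branching_uniq bu ux uz) eqxx in zx.
Qed.

Lemma leaf_neighbour_branching u x : ~~ branching G u -> adj G u x -> branching G x.
Proof.
move=> bu ux; apply: contraT => bx; have xu : adj G x u by rewrite adjC.
have [v [_ sv]] := exists_on_side n2 m2 u (~~ (u < n)).
have vS : v \notin [set u; x].
  rewrite !inE negb_or; apply/andP; split; apply/eqP => e; move: sv; rewrite e.
    by case: (u < n).
  by rewrite (leaf_neighbour_side bu ux); case: (u < n).
have [a [b [aS bS ab]]] := connect_exit (cG u v) (set21 u x) vS.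
move: bS; case/set2P: aS => ea; rewrite ea in ab.
  by rewrite (not_branching_uniq bu ux ab) set22.
by rewrite (not_branching_uniq bx xu ab) set21.
Qed.

Lemma branching_side_uniq u u' :
  branching G u -> branching G u' -> (u < n) = (u' < n) -> u = u'.
Proof.
move=> bu bu' side; apply/eqP; apply: contraT => uu'; exfalso.
apply: (acyclic_twins sG aG uu' bu); apply: lin_dep2_eq.
- by apply/existsP; apply: branching_cut_row.
- by apply/existsP; apply: branching_cut_row.
- by rewrite -/(cut_rank2 G u u') rG // side eqxx.
Qed.

Lemma exists_branching_on_side (t : bool) : exists a, branching G a && ((a < n) == t).
Proof.
have [u [_ su]] := exists_on_side n2 m2 (Ordinal (ltn_addr m (ltnW n2))) t.
have [bu|lu] := boolP (branching G u); first by exists u; rewrite bu su eqxx.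
have [x ux] := exists_neighbour u.
exists x; rewrite (leaf_neighbour_branching lu ux).
by rewrite (leaf_neighbour_side lu ux) su eqxx.
Qed.

Lemma cross_edge_branching x y :
  adj G x y -> (x < n) != (y < n) -> branching G x && branching G y.
Proof.
move=> xy sxy; apply/andP; split; apply: contraTT sxy => leaf.
  by rewrite (leaf_neighbour_side leaf xy) eqxx.
by rewrite adjC in xy; rewrite (leaf_neighbour_side leaf xy) eqxx.
Qed.

Lemma binary_star_of_acyclic : binary_star G.
Proof.
have [a /andP[ba /eqP sa]] := exists_branching_on_side true.
have [b /andP[bb /eqP sb]] := exists_branching_on_side false.
have ab : a != b by apply: contraTneq sa => ->; rewrite sb.
have branchingP z : branching G z -> z = a \/ z = b.
  move=> bz; case sz: (z < n); [left | right]; apply: branching_side_uniq => //.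
    by rewrite sz sa.
  by rewrite sz sb.
have parent x : x != a -> x != b ->
    exists2 c, c \in [set a; b] & forall y, adj G x y = (y == c).
  move=> xa xb; have lx : ~~ branching G x.
    by apply/negP => /branchingP[] xe; move: xa xb; rewrite xe eqxx.
  have [c xc] := exists_neighbour x; exists c.
    by case/branchingP: (leaf_neighbour_branching lx xc) => ->; rewrite !inE eqxx ?orbT.
  move=> y; apply/idP/eqP => [xy | ->]; last exact: xc.
  exact: not_branching_uniq lx xc xy.
have ab_edge : adj G a b.
  apply: contraT => nab.
  have aS : a \in [set z : 'I_(n + m) | z < n] by rewrite inE sa.
  have bS : b \notin [set z : 'I_(n + m) | z < n] by rewrite inE sb.
  have [x [y [xS yS xy]]] := connect_exit (cG a b) aS bS; rewrite !inE in xS yS.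
  have /andP[bx by_] : branching G x && branching G y.
    by apply: cross_edge_branching xy _; rewrite xS (negbTE yS).
  have xa : x = a by apply: branching_side_uniq; rewrite ?xS ?sa.
  have yb : y = b by apply: branching_side_uniq; rewrite ?sb ?(negbTE yS).
  by rewrite -xa -yb xy in nab.
exists a, b; split; [exact: ab | exact: ab_edge | |].
- move=> x xa xb; have [c cab xc] := parent x xa xb.
  rewrite -[X in X (+) _]/(adj G a x) -[X in _ (+) X]/(adj G b x).
  rewrite !(adjC G _ x) !xc.
  by case/set2P: cab => ->; rewrite eqxx ?(eq_sym b a) (negbTE ab).
- move=> x y xa xb ya yb; have [c cab xc] := parent x xa xb.
  rewrite -[_ \in _]/(adj G x y) xc; apply: contraL cab => /eqP <-.
  by rewrite !inE negb_or ya yb.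
Qed.

End TreesInOrbit.

Theorem theorem5 (n m : nat) (G : graph 'I_(n + m)) :
  2 <= n -> 2 <= m -> lc_orbit (Knm n m) G ->
  (min_edges_in_orbit (Knm n m) G <-> binary_star G) /\
  (binary_star G -> #|G| = n + m - 1).
Proof.
move=> n2 m2 [s ->]; set K := Knm n m.
have simple s' : simple_graph (lc_seq K s').
  by apply: simple_graph_lc_seq; apply: simple_graph_Knm.
have conn s' : connected (lc_seq K s').
  by apply: connected_lc_seq; apply: connected_Knm.
have card_ge s' : n + m <= #|lc_seq K s'|.+1.
  by have := connected_card_edges (conn s'); rewrite card_ord.
have card_star s' : binary_star (lc_seq K s') -> #|lc_seq K s'|.+1 = n + m.
  move=> bs; apply/eqP; rewrite eqn_leq card_ge andbT.
  by have := binary_star_card (simple s') bs; rewrite card_ord.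
have [s0 bs0] : exists s0, binary_star (lc_seq K s0).
  have a_lt : 0 < n + m by lia.
  have b_lt : n < n + m by lia.
  exists [:: Ordinal a_lt; Ordinal b_lt; Ordinal a_lt].
  by apply: binary_star_Knm_pivot; rewrite /= ?ltnn //; lia.
split; [split|].
- move=> min; apply: (binary_star_of_acyclic n2 m2 (simple s) (conn s)) => [|u v uv].
    apply: acyclic_of_card (conn s) _; rewrite card_ord.
    by have := min _ (ex_intro _ s0 erefl); have := card_star s0 bs0; lia.
  by rewrite cut_rank2_lc_seq cut_rank2_Knm.
- by move=> bs _ [s' ->]; have := card_ge s'; have := card_star s bs; lia.
- by move=> bs; have := card_star s bs; lia.
Qed.
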